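(* Let $X,Y$ be $c$-free with respect to $(\varphi,\psi)$ on $\mathbb{C}\langle X,Y\rangle$, let $A,B\in M_N(\mathbb{C})$, $\mathbf{\Psi}=(I-z(AX+BY))^{-1}$, and $F^\varphi_X=\beta^{\delta,\varphi}_X(X\mathbf{\Psi})$, $F^\varphi_Y=\beta^{\delta,\varphi}_Y(Y\mathbf{\Psi})$. Then $$M^\varphi_{AX+BY}(z):=\varphi(\mathbf{\Psi})=(I-zAF^\varphi_X-zBF^\varphi_Y)^{-1}.$$ Consequently, if $P\in\mathbb{C}\langle X,Y\rangle$ has degree $m$ and $u,v\in\mathbb{C}^N$ are such that $(1-z^mP)^{-1}=u^t\mathbf{\Psi}v$ as formal power series, then $M^\varphi_{P}(z^m):=\sum_{n\ge0}\varphi(P^n)z^{mn}=u^tM^\varphi_{AX+BY}(z)v$.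
   Context: $X,Y$ are $c$-free w.r.t. $(\varphi,\psi)$ (unital functionals on $\mathbb{C}\langle X,Y\rangle$) if $\psi(u_1\cdots u_n)=0$ and $\varphi(u_1\cdots u_n)=\prod\varphi(u_j)$ whenever the $u_j$ alternate between $\mathbb{C}\langle X\rangle$ and $\mathbb{C}\langle Y\rangle$ and $\psi(u_j)=0$. Boolean cumulants $\beta^\theta_n$ of $\theta$: $\theta(a_1\cdots a_n)=\sum_{k}\beta^\theta_k(a_1,\dots,a_k)\theta(a_{k+1}\cdots a_n)$. $\beta^{\delta,\varphi}_X(1)=1$ and $\beta^{\delta,\varphi}_X(Z_1\cdots Z_k)=\beta^\varphi_k(Z_1,\dots,Z_k)$ ($Z_i\in\{X,Y\}$) if $Z_1=Z_k=X$, else $0$; $\beta^{\delta,\varphi}_Y$ analogously; extended linearly. $\mathbf{\Psi}=\sum_n z^n(AX+BY)^n$; functionals act entrywise on matrices and coefficientwise on formal power series in $z$, and inverses are formal power series inverses. *)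

From HB Require Import structures.
From mathcomp Require Import all_boot all_order all_algebra.
Set Implicit Arguments. Unset Strict Implicit. Unset Printing Implicit Defensive.
Import Order.TTheory GRing.Theory.
Local Open Scope ring_scope.

(* Letters of the free monoid on {X, Y}: X is [false], Y is [true].         *)
Notation lX := false.
Notation lY := true.
Definition word := seq bool.

Section NC.
Variable C : fieldType.

(* Elements of C<X,Y> are represented as finite formal linear combinations  *)
(* of words (a list of (coefficient, word) pairs).  Two representations     *)
(* denote the same polynomial iff [nccoef] agrees on every word.            *)
Definition ncp := seq (C * word).
Definition ncone : ncp := [:: (1, [::])].
Definition ncvar (b : bool) : ncp := [:: (1, [:: b])].
Definition ncadd (p q : ncp) : ncp := p ++ q.
Definition ncscale (c : C) (p : ncp) : ncp := [seq (c * a.1, a.2) | a <- p].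
Definition ncmul (p q : ncp) : ncp :=
  [seq (a.1 * b.1, a.2 ++ b.2) | a <- p, b <- q].
Definition ncpow (p : ncp) (n : nat) : ncp := iter n (ncmul p) ncone.
Definition nccoef (p : ncp) (w : word) : C := \sum_(a <- p | a.2 == w) a.1.

(* A linear functional on C<X,Y> is determined by its values on words;     *)
Definition nceval (f : word -> C) (p : ncp) : C := \sum_(a <- p) a.1 * f a.2.

Definition ncpoly1 (b : bool) (p : {poly C}) : ncp :=
  [seq (p`_i, nseq i b) | i <- iota 0 (size p)].

(* c-freeness of X, Y w.r.t. (phi, psi).  A family u_1..u_n is a list of  *)
(* (variable, one-variable polynomial) pairs.                              *)
Definition alternating (s : seq (bool * {poly C})) : Prop :=
  forall i, (i.+1 < size s)%N -> (nth (lX, 0) s i).1 != (nth (lX, 0) s i.+1).1.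

Definition c_free (phi psi : word -> C) : Prop :=
  forall s : seq (bool * {poly C}), (0 < size s)%N -> alternating s ->
    (forall a, a \in s -> nceval psi (ncpoly1 a.1 a.2) = 0) ->
    nceval psi (foldr (fun a q => ncmul (ncpoly1 a.1 a.2) q) ncone s) = 0 /\
    nceval phi (foldr (fun a q => ncmul (ncpoly1 a.1 a.2) q) ncone s) =
      \prod_(a <- s) nceval phi (ncpoly1 a.1 a.2).

(* Boolean cumulants of theta on words of letters:                          *)
(* theta(a_1..a_n) = sum_{k=1}^n beta_k(a_1..a_k) theta(a_{k+1}..a_n),       *)
(* solved recursively (fuel = length of the word).                          *)
Fixpoint bcum_fuel (theta : word -> C) (n : nat) (w : word) : C :=
  match n with
  | 0 => 0
  | n'.+1 => theta w -
      \sum_(1 <= k < size w) bcum_fuel theta n' (take k w) * theta (drop k w)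
  end.
Definition bcum (theta : word -> C) (w : word) : C :=
  bcum_fuel theta (size w) w.

Definition bdelta (phi : word -> C) (b : bool) (w : word) : C :=
  match w with
  | [::] => 1
  | x :: _ => if (x == b) && (last x w == b) then bcum phi w else 0
  end.

Variable N : nat.

Definition ncmx := 'M[ncp]_N.
Definition ncmx1 : ncmx := \matrix_(i, j) (if i == j then ncone else [::]).
Definition ncmx_mul (P Q : ncmx) : ncmx :=
  \matrix_(i, j) flatten [seq ncmul (P i k) (Q k j) | k <- enum 'I_N].
Definition pencil (A B : 'M[C]_N) : ncmx :=
  \matrix_(i, j) ncadd (ncscale (A i j) (ncvar lX)) (ncscale (B i j) (ncvar lY)).
Definition pencil_pow (A B : 'M[C]_N) (n : nat) : ncmx :=
  iter n (ncmx_mul (pencil A B)) ncmx1.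
Definition mxapply (f : word -> C) (P : ncmx) : 'M[C]_N :=
  \matrix_(i, j) nceval f (P i j).

(* Formal power series in z with coefficients in M_N(C): n-th coefficient. *)
Definition mser := nat -> 'M[C]_N.
Fixpoint ser_inv_seq (S : mser) (n : nat) : seq 'M[C]_N :=
  match n with
  | 0 => [:: invmx (S 0%N)]
  | n'.+1 => let l := ser_inv_seq S n' in
      rcons l (- invmx (S 0%N) *m
               \sum_(1 <= k < n'.+2) (S k *m nth 0 l (n'.+1 - k)))
  end.
Definition ser_inv (S : mser) : mser := fun n => nth 0 (ser_inv_seq S n) n.

(* Psi = sum_n z^n (AX+BY)^n; its n-th coefficient is pencil_pow A B n.     *)
Definition Mphi (phi : word -> C) (A B : 'M[C]_N) : mser :=
  fun n => mxapply phi (pencil_pow A B n).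
Definition Fphi (phi : word -> C) (b : bool) (A B : 'M[C]_N) : mser :=
  fun n => mxapply (bdelta phi b)
             (\matrix_(i, j) ncmul (ncvar b) (pencil_pow A B n i j)).
Definition denom (phi : word -> C) (A B : 'M[C]_N) : mser :=
  fun n => match n with
           | 0 => 1%:M
           | n'.+1 => - (A *m Fphi phi lX A B n') - (B *m Fphi phi lY A B n')
           end.

(* u^t Psi v, coefficient of z^k, as an element of C<X,Y>. *)
Definition uPsiv (A B : 'M[C]_N) (u v : 'cV[C]_N) (k : nat) : ncp :=
  flatten [seq ncscale (u i 0 * v j 0) (pencil_pow A B k i j)
          | i <- enum 'I_N, j <- enum 'I_N].

Definition ncdeg_eq (P : ncp) (m : nat) : Prop :=
  (exists w, size w = m /\ nccoef P w != 0) /\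
  (forall w, nccoef P w != 0 -> (size w <= m)%N).

(* (1 - z^m P)^{-1} = sum_n z^{mn} P^n (m >= 1): coefficient of z^k. *)
Definition geo (P : ncp) (m k : nat) : ncp :=
  if (m %| k)%N then ncpow P (k %/ m) else [::].
End NC.

(* Boolean cumulants turn phi(w) = sum_k beta(w_1..w_k) phi(w_k+1..w_n) into the recursion
   M_(n+1) = sum_k (A F_X,k + B F_Y,k) M_(n-k), i.e. M = (I - z A F_X - z B F_Y)^-1, as soon as
   beta^phi vanishes on every word whose first and last letters differ; c-freeness is used only
   there.  Boolean cumulants make sense for families u_1 .. u_n of one-variable elements, and by
   induction on n a family with different end letters has cumulant 0: either two neighbours are
   in the same variable and are merged, beta(.. a, b ..) = beta(.. ab ..) - beta(.. a) beta(b ..),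
   where one of the last two factors again has different ends; or the family alternates, and each
   u_i may be replaced by u_i - psi(u_i), since the error term contains the unit, which drops out
   of a Boolean cumulant.  An alternating psi-centred family is phi-multiplicative, and Boolean
   cumulants of a multiplicative functional vanish beyond order one. *)

From mathcomp Require Import all_boot all_algebra zify ring.
Import GRing.Theory.
Local Open Scope ring_scope.
Set Implicit Arguments. Unset Strict Implicit.

Lemma big_nat0_splitD (V : nmodType) (F : nat -> V) m n :
  \sum_(0 <= k < m + n) F k = \sum_(0 <= k < m) F k + \sum_(0 <= j < n) F (m + j)%N.
Proof.
rewrite (big_cat_nat _ (n := m)) ?leq_addr //; congr (_ + _).
by rewrite -{1}[m]add0n big_addn addKn; apply: eq_bigr => i _; rewrite addnC.
Qed.

Section SeqCat.
Variable T : Type.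
Implicit Types s t : seq T.

Lemma dropl_cat k s t : (k <= size s)%N -> drop k (s ++ t) = drop k s ++ t.
Proof.
rewrite drop_cat leq_eqVlt => /orP[/eqP->|->] //.
by rewrite ltnn subnn drop_size drop0.
Qed.

Lemma take_catD k s t : take (size s + k) (s ++ t) = s ++ take k t.
Proof. by rewrite take_cat ltnNge leq_addr /= addKn. Qed.

Lemma drop_catD k s t : drop (size s + k) (s ++ t) = drop k t.
Proof. by rewrite drop_cat ltnNge leq_addr /= addKn. Qed.

Lemma sortedPn (r : rel T) s : ~~ sorted r s ->
  exists s1 x y s2, s = s1 ++ x :: y :: s2 /\ ~~ r x y.
Proof.
elim: s => [|x [|y t] IH] //=; case Hxy: (r x y) => /= H.
  by have [s1 [x' [y' [s2 [-> Hr]]]]] := IH H; exists (x :: s1), x', y', s2.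
by exists [::], x, y, t; rewrite Hxy.
Qed.

End SeqCat.

Section BooleanCumulants.
Variables (R : comPzRingType) (T : Type) (Phi : seq T -> R).

Fixpoint bcumulant_rec n s :=
  match n with
  | 0 => 0
  | n'.+1 => Phi s - \sum_(1 <= k < size s) bcumulant_rec n' (take k s) * Phi (drop k s)
  end.
Definition bcumulant s := bcumulant_rec (size s) s.

Lemma bcumulant_rec_fuel n m s : (0 < size s)%N -> (size s <= n)%N -> (size s <= m)%N ->
  bcumulant_rec n s = bcumulant_rec m s.
Proof.
elim: n m s => [|n IH] [|m] s Hs Hn Hm //=; try lia.
congr (_ - _); apply: eq_big_nat => k /andP[k1 ks].
by rewrite (IH m) // size_take ks //; lia.
Qed.

Lemma bcumulantE s : (0 < size s)%N ->
  bcumulant s = Phi s - \sum_(0 <= k < (size s).-1) bcumulant (take k.+1 s) * Phi (drop k.+1 s).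
Proof.
rewrite {1}/bcumulant; case Es: (size s) => [|n] //= _.
rewrite big_add1 Es /=; congr (_ - _); apply: eq_big_nat => k /andP[_ kn].
have Hk : size (take k.+1 s) = k.+1 by rewrite size_take Es ltnS kn.
congr (_ * _); rewrite /bcumulant Hk; apply: bcumulant_rec_fuel; rewrite ?Hk //; lia.
Qed.

Lemma bcumulant_catE s1 x s2 : bcumulant (s1 ++ x :: s2) = Phi (s1 ++ x :: s2)
  - \sum_(0 <= k < size s1) bcumulant (take k.+1 s1) * Phi (drop k.+1 s1 ++ x :: s2)
  - \sum_(0 <= j < size s2) bcumulant (s1 ++ x :: take j s2) * Phi (drop j s2).
Proof.
rewrite bcumulantE; last by rewrite size_cat addnS.
rewrite -addrA -opprD; congr (_ - _).
have -> : (size (s1 ++ x :: s2)).-1 = (size s1 + size s2)%N by rewrite size_cat addnS.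
rewrite big_nat0_splitD; congr (_ + _).
  by apply: eq_big_nat => k /andP[_ Hk]; rewrite takel_cat // dropl_cat.
by apply: eq_bigr => j _; rewrite -!addnS take_catD drop_catD.
Qed.

Lemma bcumulant_consE x s : bcumulant (x :: s) =
  Phi (x :: s) - \sum_(0 <= j < size s) bcumulant (x :: take j s) * Phi (drop j s).
Proof. by rewrite -[x :: s]cat0s bcumulant_catE big_geq // subr0. Qed.

Lemma bcumulant1 x : bcumulant [:: x] = Phi [:: x].
Proof. by rewrite bcumulant_consE big_geq // subr0. Qed.

Lemma bcumulant_merge a b m :
  (forall s1 s2, Phi (s1 ++ m :: s2) = Phi (s1 ++ a :: b :: s2)) ->
  forall s1 s2, bcumulant (s1 ++ a :: b :: s2) =
    bcumulant (s1 ++ m :: s2) - bcumulant (rcons s1 a) * bcumulant (b :: s2).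
Proof.
move=> Hm s1 s2; elim: {s2}(size s2).+1 {-2}s2 (ltnSn (size s2)) s1 => // n IH s2 Hs2 s1.
rewrite bcumulant_consE !bcumulant_catE big_nat_recl //= -/(size s2) cats1 -Hm.
under eq_bigr do rewrite -Hm.
have IHj j : (j < size s2)%N -> bcumulant (s1 ++ a :: b :: take j s2) =
    bcumulant (s1 ++ m :: take j s2) - bcumulant (rcons s1 a) * bcumulant (b :: take j s2).
  by move=> Hj; apply: IH; rewrite size_take Hj; lia.
under [X in _ * _ + X]eq_big_nat => j /andP[_ Hj] do rewrite IHj // mulrBl -mulrA.
rewrite sumrB -mulr_sumr; ring.
Qed.

Lemma bcumulant_linear a b c (l : R) :
  (forall s1 s2, Phi (s1 ++ c :: s2) = l * Phi (s1 ++ a :: s2) + Phi (s1 ++ b :: s2)) ->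
  forall s1 s2, bcumulant (s1 ++ c :: s2) =
    l * bcumulant (s1 ++ a :: s2) + bcumulant (s1 ++ b :: s2).
Proof.
move=> Hl s1 s2; elim: {s2}(size s2).+1 {-2}s2 (ltnSn (size s2)) s1 => // n IH s2 Hs2 s1.
rewrite !bcumulant_catE Hl.
under eq_bigr do rewrite Hl mulrDr mulrCA.
have IHj j : (j < size s2)%N -> bcumulant (s1 ++ c :: take j s2) =
    l * bcumulant (s1 ++ a :: take j s2) + bcumulant (s1 ++ b :: take j s2).
  by move=> Hj; apply: IH; rewrite size_take Hj; lia.
under [X in _ - X]eq_big_nat => j /andP[_ Hj] do rewrite IHj // mulrDl -mulrA.
rewrite !big_split -!mulr_sumr /=; ring.
Qed.

Section Unit.
Variable e : T.
Hypothesis Phi_unit : forall s1 s2, Phi (s1 ++ e :: s2) = Phi (s1 ++ s2).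
Hypothesis Phi_nil : Phi [::] = 1.

Lemma bcumulant_unit_head s : (0 < size s)%N -> bcumulant (e :: s) = 0.
Proof.
case: s => [|x s2] // _.
rewrite -[e :: _]/([::] ++ [:: e, x & s2]) (bcumulant_merge (m := x)); last first.
  by move=> t1 t2; rewrite -cat_rcons -cats1 -catA /= Phi_unit.
by rewrite bcumulant1 -[[:: e]]/([::] ++ [:: e]) Phi_unit Phi_nil mul1r subrr.
Qed.

Lemma bcumulant_unit_inner s1 s2 : (0 < size s1)%N ->
  bcumulant (s1 ++ e :: s2) = if s2 is [::] then 0 else bcumulant (s1 ++ s2).
Proof.
case/lastP: s1 => [|t y] // _.
rewrite -cats1 -catA /= (bcumulant_merge (m := y)); last first.
  by move=> t1 t2; rewrite -cat1s catA -[y :: e :: t2]/([:: y] ++ e :: t2) catA Phi_unit -catA.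
case: s2 => [|z s2].
  by rewrite bcumulant1 -[[:: e]]/([::] ++ [:: e]) Phi_unit Phi_nil mulr1 cats1 subrr.
by rewrite bcumulant_unit_head // mulr0 subr0 -catA.
Qed.

End Unit.

Lemma bcumulant_eq0_multiplicative (P : seq T -> Prop) :
  (forall k s, P s -> P (take k s)) -> (forall k s, P s -> P (drop k s)) ->
  (forall s, P s -> Phi s = \prod_(x <- s) Phi [:: x]) ->
  forall s, P s -> (1 < size s)%N -> bcumulant s = 0.
Proof.
move=> Ptake Pdrop PhiM s.
elim: {s}(size s).+1 {-2}s (ltnSn (size s)) => // n IH s Hs Ps Hsize.
case: s Hs Ps Hsize => [|x [|y r]] //= Hs Ps _.
rewrite bcumulantE //= big_nat_recl //= big_nat_cond big1; last first.
  move=> k /andP[/andP[_ Hk] _]; rewrite IH ?mul0r //.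
  - by rewrite /= size_take; case: ifP => //=; lia.
  - exact: (Ptake k.+2 _ Ps).
by rewrite addr0 bcumulant1 (PhiM _ Ps) (PhiM _ (Pdrop 1 _ Ps)) /= big_cons subrr.
Qed.

End BooleanCumulants.

Lemma bcumulant_map (R : comPzRingType) (T U : Type) (Phi : seq T -> R) (Psi : seq U -> R)
    (g : U -> T) :
  (forall s, Psi s = Phi (map g s)) -> forall s, bcumulant Psi s = bcumulant Phi (map g s).
Proof.
move=> Hg s; elim: {s}(size s).+1 {-2}s (ltnSn (size s)) => // n IH [|x s] Hs //.
rewrite bcumulantE // bcumulantE ?size_map //; congr (_ - _); first exact: Hg.
apply: eq_big_nat => k /andP[_ Hk]; rewrite -map_take -map_drop IH ?Hg //.
by rewrite size_take; case: ifP => //=; lia.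
Qed.

Lemma bcum_bcumulant (C : fieldType) (theta : word -> C) : bcum theta =1 bcumulant theta.
Proof.
move=> w; rewrite /bcum /bcumulant; move: (size w) => n.
by elim: n w => [|n IH] w //=; congr (_ - _); apply: eq_bigr => k _; rewrite IH.
Qed.

Section NCEval.
Variable C : fieldType.
Implicit Types (f g : word -> C) (p q : ncp C).

Lemma eq_nceval f g p : f =1 g -> nceval f p = nceval g p.
Proof. by move=> H; apply: eq_bigr => a _; rewrite H. Qed.

Lemma nceval_cat f p q : nceval f (p ++ q) = nceval f p + nceval f q.
Proof. exact: big_cat. Qed.

Lemma nceval_linear f g c p :
  nceval (fun w => c * f w + g w) p = c * nceval f p + nceval g p.
Proof. by rewrite /nceval mulr_sumr -big_split; apply: eq_bigr => a _ /=; ring. Qed.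

Lemma nceval_scale f c p : nceval f (ncscale c p) = c * nceval f p.
Proof. by rewrite /nceval big_map mulr_sumr; apply: eq_bigr => a _ /=; rewrite mulrA. Qed.

Lemma nceval_mono f c w : nceval f [:: (c, w)] = c * f w.
Proof. by rewrite /nceval big_seq1. Qed.

Lemma nceval_one f : nceval f (ncone C) = f [::].
Proof. by rewrite nceval_mono mul1r. Qed.

Lemma nceval_var f b : nceval f (ncvar C b) = f [:: b].
Proof. by rewrite nceval_mono mul1r. Qed.

Lemma nceval_mul f p q :
  nceval f (ncmul p q) = nceval (fun w => nceval (fun w' => f (w ++ w')) q) p.
Proof.
rewrite /nceval /ncmul big_allpairs_dep; apply: eq_bigr => a _ /=.
by rewrite mulr_sumr; apply: eq_bigr => b _ /=; rewrite mulrA.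
Qed.

Lemma nceval_eq_coef f p q : nccoef p =1 nccoef q -> nceval f p = nceval f q.
Proof.
move=> Hpq; set ws := undup (map snd (p ++ q)).
have nceval_coef r : {subset map snd r <= ws} -> nceval f r = \sum_(w <- ws) nccoef r w * f w.
  move=> Hr; under [RHS]eq_bigr do rewrite /nccoef big_mkcond mulr_suml.
  rewrite exchange_big; apply: eq_big_seq => a Ha /=.
  rewrite (bigD1_seq a.2) ?undup_uniq ?Hr ?map_f //= eqxx big1 ?addr0 // => w Hw.
  by rewrite eq_sym (negbTE Hw) mul0r.
rewrite !nceval_coef; first by apply: eq_bigr => w _; rewrite Hpq.
- by move=> w Hw; rewrite mem_undup map_cat mem_cat Hw orbT.
- by move=> w Hw; rewrite mem_undup map_cat mem_cat Hw.
Qed.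

Definition prodeval f (s : seq (ncp C)) := nceval f (foldr (@ncmul C) (ncone C) s).

Lemma eq_prodeval f g s : f =1 g -> prodeval f s = prodeval g s.
Proof. exact: eq_nceval. Qed.

Lemma prodeval_nil f : prodeval f [::] = f [::].
Proof. exact: nceval_one. Qed.

Lemma prodeval_cons f p s :
  prodeval f (p :: s) = nceval (fun w => prodeval (fun w' => f (w ++ w')) s) p.
Proof. exact: nceval_mul. Qed.

Lemma prodeval_cat f s1 s2 :
  prodeval f (s1 ++ s2) = prodeval (fun w => prodeval (fun w' => f (w ++ w')) s2) s1.
Proof.
elim: s1 f => [|p s1 IH] f /=; first by rewrite prodeval_nil; apply: eq_prodeval.
rewrite !prodeval_cons; apply: eq_nceval => w; rewrite IH.
by apply: eq_prodeval => v; apply: eq_prodeval => u; rewrite catA.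
Qed.

Lemma prodeval_linear p q r c :
  (forall f, nceval f p = c * nceval f q + nceval f r) ->
  forall f s1 s2, prodeval f (s1 ++ p :: s2) =
    c * prodeval f (s1 ++ q :: s2) + prodeval f (s1 ++ r :: s2).
Proof.
move=> H f s1 s2; rewrite !prodeval_cat -nceval_linear.
by apply: eq_prodeval => w; rewrite !prodeval_cons H.
Qed.

Lemma prodeval_mul f s1 s2 p q :
  prodeval f (s1 ++ ncmul p q :: s2) = prodeval f (s1 ++ p :: q :: s2).
Proof.
rewrite !prodeval_cat; apply: eq_prodeval => w; rewrite !prodeval_cons nceval_mul.
apply: eq_nceval => v /=; rewrite prodeval_cons; apply: eq_nceval => u /=.
by apply: eq_prodeval => t; rewrite !catA.
Qed.

Lemma prodeval_one f s1 s2 : prodeval f (s1 ++ ncone C :: s2) = prodeval f (s1 ++ s2).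
Proof.
rewrite !prodeval_cat; apply: eq_prodeval => w.
by rewrite prodeval_cons nceval_one; apply: eq_prodeval.
Qed.

Lemma prodeval_vars f w : prodeval f (map (@ncvar C) w) = f w.
Proof.
elim: w f => [|b w IH] f /=; first exact: prodeval_nil.
by rewrite prodeval_cons nceval_var IH.
Qed.

Lemma eq_prodeval_map (I : eqType) (g1 g2 : I -> ncp C) s :
  {in s, forall i f, nceval f (g1 i) = nceval f (g2 i)} ->
  forall f, prodeval f (map g1 s) = prodeval f (map g2 s).
Proof.
elim: s => [|i s IH] H f //=.
rewrite !prodeval_cons H ?mem_head //; apply: eq_nceval => w.
by apply: IH => j Hj; apply: H; rewrite in_cons Hj orbT.
Qed.

End NCEval.

Section OneVariable.
Variable C : fieldType.

Definition in_var (b : bool) (p : ncp C) := all (fun a => all (pred1 b) a.2) p.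

Definition ncp_to_poly (p : ncp C) : {poly C} := \sum_(a <- p) a.1 *: 'X^(size a.2).

Lemma in_var_mul b p q : in_var b p -> in_var b q -> in_var b (ncmul p q).
Proof.
move=> /allP Hp /allP Hq; apply/allP => _ /allpairsP[[a a'] [Ha Ha' ->]] /=.
by rewrite all_cat (Hp _ Ha) (Hq _ Ha').
Qed.

Lemma nceval_ncp_to_poly (f : word -> C) b p :
  in_var b p -> nceval f (ncpoly1 b (ncp_to_poly p)) = nceval f p.
Proof.
move=> Hp; set M := maxn (size (ncp_to_poly p)) (\max_(a <- p) (size a.2).+1).
have -> : nceval f (ncpoly1 b (ncp_to_poly p)) =
    \sum_(0 <= i < M) (ncp_to_poly p)`_i * f (nseq i b).
  rewrite /nceval /ncpoly1 big_map -[in LHS](subn0 (size _)) -/(index_iota 0 _).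
  rewrite [in RHS](big_cat_nat (n := size (ncp_to_poly p))) ?leq_maxl //= [X in _ + X]big_nat_cond.
  by rewrite [X in _ + X]big1 ?addr0 // => i /andP[/andP[Hi _] _]; rewrite nth_default ?mul0r.
under eq_bigr do rewrite coef_sumMXn big_mkcond mulr_suml.
rewrite exchange_big; apply: eq_big_seq => a Ha /=.
have HaM : (size a.2 < M)%N.
  apply: leq_trans (leq_maxr _ _).
  exact: (leq_bigmax_seq (F := fun a : C * word => (size a.2).+1)).
rewrite (bigD1_seq (size a.2)) ?mem_index_iota ?iota_uniq //= eqxx.
rewrite big1 ?addr0; last by move=> i /negbTE; rewrite eq_sym => ->; rewrite mul0r.
by have /all_pred1P <- := allP Hp a Ha.
Qed.

End OneVariable.

Section MixedCumulants.
Variables (C : fieldType) (phi psi : word -> C).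
Hypotheses (phi_nil : phi [::] = 1) (psi_nil : psi [::] = 1) (cfree : c_free phi psi).

Local Notation family := (seq (bool * ncp C)).
Implicit Types (s t : family) (x y : bool * ncp C).

(* A family u_1, .., u_n is a list of (letter, element) pairs; fmoment is phi(u_1 .. u_n). *)
Definition fmoment s := prodeval phi (map snd s).
Local Notation fcum := (bcumulant fmoment).

Definition adapted s := all (fun x => in_var x.1 x.2) s.
Definition head_letter s := head lX (map fst s).
Definition last_letter s := last lX (map fst s).
Definition mixed s := [&& adapted s, (1 < size s)%N & head_letter s != last_letter s].

Definition center x := (x.1, x.2 ++ ncscale (- nceval psi x.2) (ncone C)).

Lemma fcum_merge b x y s1 s2 : fcum (s1 ++ x :: y :: s2) =
  fcum (s1 ++ (b, ncmul x.2 y.2) :: s2) - fcum (rcons s1 x) * fcum (y :: s2).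
Proof. by apply: bcumulant_merge => t1 t2; rewrite /fmoment !map_cat /= prodeval_mul. Qed.

Lemma fmoment_one b s1 s2 : fmoment (s1 ++ (b, ncone C) :: s2) = fmoment (s1 ++ s2).
Proof. by rewrite /fmoment !map_cat /= prodeval_one. Qed.

Lemma fmoment_nil : fmoment [::] = 1.
Proof. by rewrite /fmoment prodeval_nil. Qed.

Lemma fcum_center x s1 s2 : fcum (s1 ++ x :: s2) =
  nceval psi x.2 * fcum (s1 ++ (x.1, ncone C) :: s2) + fcum (s1 ++ center x :: s2).
Proof.
apply: bcumulant_linear => t1 t2; rewrite /fmoment !map_cat /=.
by apply: prodeval_linear => f; rewrite nceval_cat nceval_mono nceval_one; ring.
Qed.

Lemma center_centered x : nceval psi (center x).2 = 0.
Proof. by rewrite nceval_cat nceval_mono psi_nil !mulr1 subrr. Qed.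

Lemma in_var_center x : in_var x.1 x.2 -> in_var (center x).1 (center x).2.
Proof. by rewrite /in_var all_cat => ->. Qed.

Definition alternating_centered s :=
  sorted (fun x y => x.1 != y.1) s && all (fun x => in_var x.1 x.2 && (nceval psi x.2 == 0)) s.

Lemma fmoment_alternating_centered s :
  alternating_centered s -> fmoment s = \prod_(x <- s) fmoment [:: x].
Proof.
case: s => [|x0 s0]; first by rewrite fmoment_nil big_nil.
set s := x0 :: s0 => /andP[Halt Hc].
have to_polyE : {in s, forall x f, nceval f (ncpoly1 x.1 (ncp_to_poly x.2)) = nceval f x.2}.
  by move=> x /(allP Hc) /andP[Hx _] f; rewrite nceval_ncp_to_poly.
set u := [seq (x.1, ncp_to_poly x.2) | x <- s].
have [|||_] := cfree (s := u).
- by rewrite size_map.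
- move=> i Hi; rewrite size_map in Hi.
  by rewrite !(nth_map (lX, [::])) ?(ltnW Hi) //=; apply: (sortedP (lX, [::]) Halt).
- move=> _ /mapP[x Hx ->] /=; rewrite to_polyE //.
  by have /andP[_ /eqP] := allP Hc x Hx.
rewrite -foldr_map -map_comp -/(prodeval _ _) (eq_prodeval_map to_polyE) -/(fmoment s) => ->.
rewrite big_map; apply: eq_big_seq => x Hx /=.
by rewrite to_polyE // /fmoment prodeval_cons; apply: eq_nceval => w; rewrite prodeval_nil cats0.
Qed.

Lemma fcum_alternating_centered_eq0 s :
  alternating_centered s -> (1 < size s)%N -> fcum s = 0.
Proof.
apply: (bcumulant_eq0_multiplicative (P := alternating_centered)) => [k t|k t|t].
- case/andP=> Ht; rewrite -{1}(cat_take_drop k t) all_cat => /andP[Hk _].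
  by rewrite /alternating_centered take_sorted.
- case/andP=> Ht; rewrite -{1}(cat_take_drop k t) all_cat => /andP[_ Hk].
  by rewrite /alternating_centered drop_sorted.
- exact: fmoment_alternating_centered.
Qed.

Lemma fcum_unit_head b s : (0 < size s)%N -> fcum ((b, ncone C) :: s) = 0.
Proof. by apply: bcumulant_unit_head; [exact: fmoment_one | exact: fmoment_nil]. Qed.

Lemma fcum_unit_inner b s1 s2 : (0 < size s1)%N ->
  fcum (s1 ++ (b, ncone C) :: s2) = if s2 is [::] then 0 else fcum (s1 ++ s2).
Proof. by apply: bcumulant_unit_inner; [exact: fmoment_one | exact: fmoment_nil]. Qed.

Lemma head_letter_cat s t : (0 < size s)%N -> head_letter (s ++ t) = head_letter s.
Proof. by case: s. Qed.

Lemma last_letter_cat s t : (0 < size t)%N -> last_letter (s ++ t) = last_letter t.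
Proof. by case: t => // y t _; rewrite /last_letter map_cat last_cat. Qed.

Lemma last_letter_rcons s x : last_letter (rcons s x) = x.1.
Proof. by rewrite /last_letter map_rcons last_rcons. Qed.

Lemma letters_center s : map fst (map center s) = map fst s.
Proof. by rewrite -map_comp. Qed.

Lemma mixed_merge s1 x y s2 p : x.1 = y.1 -> in_var x.1 p ->
  mixed (s1 ++ x :: y :: s2) -> mixed (s1 ++ (x.1, p) :: s2).
Proof.
move=> Hxy Hp /and3P[Had _ Hends]; apply/and3P; split.
- by move: Had; rewrite /adapted !all_cat /= Hp => /and3P[-> _ /andP[_ ->]].
- case: s1 s2 Hends {Had} => [|? ?] [|? ?] Hends; rewrite ?size_cat /=; try lia.
  by move: Hends; rewrite /head_letter /last_letter /= Hxy eqxx.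
- move: Hends; rewrite /head_letter /last_letter !map_cat !last_cat /= -Hxy.
  by case: s1 {Had}.
Qed.

Lemma mixed_suffix s1 x y s2 : x.1 = y.1 -> x.1 = head_letter (s1 ++ x :: y :: s2) ->
  mixed (s1 ++ x :: y :: s2) -> mixed (y :: s2).
Proof.
move=> Hxy Hhead /and3P[Had _ Hends].
have Hlast : last_letter (s1 ++ x :: y :: s2) = last_letter (y :: s2).
  by rewrite /last_letter map_cat last_cat.
rewrite Hlast -Hhead in Hends; apply/and3P; split.
- by move: Had; rewrite /adapted all_cat /= => /and3P[_ _ ->].
- by case: s2 Hends {Had Hlast Hhead} => [|? ?] //; rewrite /last_letter /= Hxy eqxx.
- by rewrite /head_letter /= -Hxy.
Qed.

Lemma mixed_prefix s1 x y s2 : x.1 <> head_letter (s1 ++ x :: y :: s2) ->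
  mixed (s1 ++ x :: y :: s2) -> mixed (rcons s1 x).
Proof.
move=> Hhead /and3P[Had _ _]; apply/and3P; split.
- by move: Had; rewrite /adapted all_cat all_rcons /= => /and3P[-> -> _].
- by case: s1 Hhead {Had} => [|? ?] //=; rewrite size_rcons.
- case: s1 Hhead {Had} => [|z s1] Hhead; first by rewrite /head_letter in Hhead.
  by rewrite last_letter_rcons eq_sym; apply/eqP => Hz; apply: Hhead; rewrite Hz.
Qed.

Section Induction.
Variable s : family.
Hypothesis IH : forall t, (size t < size s)%N -> mixed t -> fcum t = 0.
Hypothesis mixed_s : mixed s.

Lemma fcum_center_prefix k : (k <= size s)%N ->
  fcum s = fcum (map center (take k s) ++ drop k s).
Proof.
have /and3P[Had Hsz Hends] := mixed_s.
elim: k => [|k IHk] Hk; first by rewrite take0 drop0.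
rewrite IHk ?(ltnW Hk) // (drop_nth (lX, [::]) Hk) fcum_center.
rewrite (take_nth (lX, [::]) Hk) map_rcons cat_rcons.
(* The correction term contains the unit: in front it kills the cumulant, inside it can be
   dropped, leaving a shorter family with the same end letters. *)
suff -> : fcum (map center (take k s) ++ ((nth (lX, [::]) s k).1, ncone C) :: drop k.+1 s) = 0.
  by rewrite mulr0 add0r.
case: k IHk Hk => [|k] _ Hk.
  by rewrite take0 fcum_unit_head // size_drop subn_gt0.
rewrite fcum_unit_inner ?size_map ?size_take ?Hk //.
case Hpost: (drop k.+2 s) => [|z post] //; rewrite -Hpost.
have Hpost0 : (0 < size (drop k.+2 s))%N by rewrite Hpost.
apply: IH; first by rewrite size_cat size_map size_take size_drop Hk; lia.
apply/and3P; split.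
- rewrite /adapted all_cat all_map; apply/andP; split; apply/allP => x Hx /=.
    by apply: in_var_center; apply: (allP Had); apply: mem_take Hx.
  by apply: (allP Had); apply: mem_drop Hx.
- by rewrite size_cat size_map size_take Hk; lia.
- rewrite head_letter_cat ?size_map ?size_take ?Hk // last_letter_cat //.
  rewrite /head_letter letters_center -/(head_letter _).
  rewrite -(head_letter_cat (drop k.+1 s)) ?size_take ?Hk //.
  by rewrite cat_take_drop -(last_letter_cat (take k.+2 s)) // cat_take_drop.
Qed.

Lemma fcum_alternating_eq0 : sorted (fun x y => x.1 != y.1) s -> fcum s = 0.
Proof.
move=> Halt; have /and3P[Had Hsz _] := mixed_s.
rewrite (fcum_center_prefix (leqnn _)) take_size drop_size cats0.
apply: fcum_alternating_centered_eq0; last by rewrite size_map.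
apply/andP; split; first by rewrite sorted_map.
rewrite all_map; apply/allP => x /(allP Had) Hx; apply/andP.
by split; [exact: in_var_center | exact/eqP/center_centered].
Qed.

Lemma fcum_repeat_eq0 s1 x y s2 : s = s1 ++ x :: y :: s2 -> x.1 = y.1 -> fcum s = 0.
Proof.
move=> Es Hxy; have Hs := mixed_s; have IHs := IH; rewrite Es in Hs IHs *.
have /and3P[Had _ _] := Hs.
move: Had; rewrite /adapted all_cat /= -Hxy => /and3P[_ Hx /andP[Hy _]].
have Hmid : mixed (s1 ++ (x.1, ncmul x.2 y.2) :: s2).
  by apply: (mixed_merge Hxy _ Hs); exact: in_var_mul.
rewrite (fcum_merge x.1) (IHs _ _ Hmid); last by rewrite !size_cat /=; lia.
rewrite sub0r; apply/eqP; rewrite oppr_eq0 mulf_eq0; apply/orP.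
case: (x.1 =P head_letter (s1 ++ x :: y :: s2)) => Hhead; [right | left]; apply/eqP/IHs.
- by rewrite !size_cat /=; lia.
- exact: mixed_suffix Hs.
- by rewrite size_rcons size_cat /=; lia.
- exact: mixed_prefix Hs.
Qed.

End Induction.

Lemma fcum_mixed_eq0 s : mixed s -> fcum s = 0.
Proof.
elim: {s}(size s).+1 {-2}s (ltnSn (size s)) => // n IHn s Hs Hmixed.
have IH t : (size t < size s)%N -> mixed t -> fcum t = 0.
  by move=> Ht; apply: IHn; lia.
have [Halt|/sortedPn[s1 [x [y [s2 [Es /negPn/eqP Hxy]]]]]] :=
  boolP (sorted (fun x y => x.1 != y.1) s).
- exact: fcum_alternating_eq0 IH Hmixed Halt.
- exact: (fcum_repeat_eq0 IH Hmixed Es Hxy).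
Qed.

Lemma bcum_mixed_eq0 (b : bool) (w : word) : last b w != b -> bcum phi (b :: w) = 0.
Proof.
move=> Hlast; rewrite bcum_bcumulant.
rewrite (bcumulant_map (Phi := fmoment) (g := fun b => (b, ncvar C b))); last first.
  by move=> v; rewrite /fmoment -map_comp prodeval_vars.
apply: fcum_mixed_eq0; apply/and3P; split.
- by apply/allP => _ /mapP[c _ ->]; rewrite /in_var /= eqxx.
- by case: w Hlast => [|? ?]; rewrite //= eqxx.
- by rewrite /head_letter /last_letter -map_comp map_id /= eq_sym.
Qed.

End MixedCumulants.

Section PencilMoments.
Variables (C : fieldType) (N : nat) (A B : 'M[C]_N).
Implicit Types (f g : word -> C).

Definition moment_mx f n := mxapply f (pencil_pow A B n).

Lemma eq_moment_mx f g n : f =1 g -> moment_mx f n = moment_mx g n.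
Proof. by move=> H; apply/matrixP => i j; rewrite !mxE; apply: eq_nceval. Qed.

Lemma moment_mx_linear f g c n :
  moment_mx (fun w => c * f w + g w) n = c *: moment_mx f n + moment_mx g n.
Proof. by apply/matrixP => i j; rewrite !mxE nceval_linear. Qed.

Lemma moment_mx_add f g n :
  moment_mx (fun w => f w + g w) n = moment_mx f n + moment_mx g n.
Proof.
by rewrite -[moment_mx f n]scale1r -moment_mx_linear; apply: eq_moment_mx => w; rewrite mul1r.
Qed.

Lemma moment_mx_cst0 n : moment_mx (fun=> 0) n = 0.
Proof. by apply/matrixP => i j; rewrite !mxE /nceval big1 // => a _; rewrite mulr0. Qed.

Lemma moment_mx0 f : moment_mx f 0 = (f [::])%:M.
Proof.
apply/matrixP => i j; rewrite !mxE.
by case: (i == j); rewrite ?nceval_one // /nceval big_nil.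
Qed.

Lemma moment_mxS f n : moment_mx f n.+1 =
  A *m moment_mx (fun w => f (lX :: w)) n + B *m moment_mx (fun w => f (lY :: w)) n.
Proof.
apply/matrixP => i j; rewrite /moment_mx /pencil_pow iterS -/(pencil_pow A B n) !mxE.
rewrite /nceval big_flatten big_map -/(nceval _ _).
rewrite -!(big_enum _ _ (mem 'I_N)) /= -big_split /=; apply: eq_bigr => k _.
by rewrite -/(nceval f _) nceval_mul /pencil !mxE nceval_cat !nceval_scale !nceval_var.
Qed.

Definition word_conv f g (w : word) :=
  \sum_(0 <= k < (size w).+1) f (take k w) * g (drop k w).

Lemma moment_mx_word_conv g n : forall f,
  moment_mx (word_conv f g) n = \sum_(0 <= k < n.+1) moment_mx f k *m moment_mx g (n - k).
Proof.
elim: n => [|n IH] f.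
  by rewrite big_nat1 !moment_mx0 /word_conv /= big_nat1 /= -scalar_mxM.
have conv_cons b : moment_mx (fun w => word_conv f g (b :: w)) n =
    f [::] *: moment_mx (fun w => g (b :: w)) n +
    moment_mx (word_conv (fun v => f (b :: v)) g) n.
  by rewrite -moment_mx_linear; apply: eq_moment_mx => w; rewrite /word_conv big_nat_recl.
rewrite moment_mxS !conv_cons !IH [RHS]big_nat_recl // moment_mx0 mul_scalar_mx subn0.
rewrite [moment_mx g n.+1]moment_mxS.
under [X in _ = _ + X]eq_bigr do rewrite subSS moment_mxS mulmxDl -!mulmxA.
by rewrite big_split /= -!mulmx_sumr !mulmxDr scalerDr -!scalemxAr addrACA.
Qed.

End PencilMoments.

Section SeriesInverse.
Variables (C : fieldType) (N : nat) (S : mser C N).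

Lemma size_ser_inv_seq n : size (ser_inv_seq S n) = n.+1.
Proof. by elim: n => [|n IH] //=; rewrite size_rcons IH. Qed.

Lemma nth_ser_inv_seq n k : (k <= n)%N -> nth 0 (ser_inv_seq S n) k = ser_inv S k.
Proof.
elim: n k => [|n IH] k; first by rewrite leqn0 => /eqP->.
rewrite leq_eqVlt => /orP[/eqP->|Hk] //.
by rewrite /= nth_rcons size_ser_inv_seq Hk IH.
Qed.

Lemma ser_invS n : ser_inv S n.+1 =
  - invmx (S 0%N) *m \sum_(1 <= k < n.+2) (S k *m ser_inv S (n.+1 - k)%N).
Proof.
rewrite {1}/ser_inv /= nth_rcons size_ser_inv_seq ltnn eqxx.
by congr (_ *m _); apply: eq_big_nat => k /andP[Hk1 Hk2]; rewrite nth_ser_inv_seq //; lia.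
Qed.

End SeriesInverse.

Section MomentSeries.
Variables (C : fieldType) (phi psi : word -> C).
Hypotheses (phi_nil : phi [::] = 1) (psi_nil : psi [::] = 1) (cfree : c_free phi psi).

Lemma phi_word_conv w : phi w = word_conv (bcum phi) phi w + (w == [::])%:R.
Proof.
rewrite /word_conv; case: w => [|b w]; first by rewrite big_nat1 /= mul0r add0r phi_nil.
rewrite big_nat_recl // big_nat_recr //= take_size drop_size phi_nil mul0r add0r addr0 mulr1.
under eq_bigr do rewrite bcum_bcumulant.
by rewrite bcum_bcumulant bcumulant_consE addrC subrK.
Qed.

Lemma bcum_bdelta b w : bcum phi (b :: w) = bdelta phi b (b :: w).
Proof.
rewrite /bdelta eqxx /=; case: eqP => // /eqP Hlast.
exact: bcum_mixed_eq0 phi_nil psi_nil cfree _ _ Hlast.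
Qed.

Variables (N : nat) (A B : 'M[C]_N).

Lemma Fphi_moment_mx b n : Fphi phi b A B n = moment_mx A B (fun w => bdelta phi b (b :: w)) n.
Proof. by apply/matrixP => i j; rewrite !mxE nceval_mul nceval_var. Qed.

Lemma Mphi_rec n : Mphi phi A B n.+1 =
  \sum_(0 <= k < n.+1)
     (A *m Fphi phi lX A B k + B *m Fphi phi lY A B k) *m Mphi phi A B (n - k)%N.
Proof.
have unit_free : moment_mx A B (fun w => (w == [::])%:R) n.+1 = 0.
  by rewrite moment_mxS !(@eq_moment_mx _ _ _ _ _ (fun=> 0)) // moment_mx_cst0 !mulmx0 addr0.
rewrite -[Mphi _ _ _ _]/(moment_mx A B phi n.+1) (eq_moment_mx A B _ phi_word_conv).
rewrite moment_mx_add unit_free addr0 moment_mx_word_conv big_nat_recl // moment_mx0 /=.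
rewrite mul_scalar_mx scale0r add0r; apply: eq_bigr => k _.
rewrite moment_mxS subSS !Fphi_moment_mx.
by rewrite !(eq_moment_mx A B _ (bcum_bdelta _)).
Qed.

Lemma Mphi_ser_inv n : Mphi phi A B n = ser_inv (denom phi A B) n.
Proof.
elim: n {-2}n (leqnn n) => [|n IH] m.
  rewrite leqn0 => /eqP->; rewrite /Mphi -/(moment_mx A B phi 0) moment_mx0 phi_nil.
  by rewrite /ser_inv /= invmx1.
rewrite leq_eqVlt => /orP[/eqP->|/IH] //.
rewrite Mphi_rec ser_invS /= invmx1 mulNmx mul1mx big_add1 /= -sumrN.
apply: eq_big_nat => k /andP[_ Hk]; rewrite subSS IH; last by lia.
by rewrite -mulNmx opprD !opprK.
Qed.

End MomentSeries.

Lemma nceval_uPsiv (C : fieldType) (N : nat) (phi : word -> C) (A B : 'M[C]_N) u v k :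
  nceval phi (uPsiv A B u v k) = (u^T *m Mphi phi A B k *m v) 0 0.
Proof.
rewrite /uPsiv /nceval big_flatten /= big_allpairs_dep /= !mxE (big_enum _ _ (mem 'I_N)) /=.
under eq_bigr do rewrite (big_enum _ _ (mem 'I_N)) /=.
rewrite exchange_big /=; apply: eq_bigr => j _; rewrite !mxE mulr_suml.
by apply: eq_bigr => i _; rewrite -/(nceval phi _) nceval_scale !mxE; ring.
Qed.

Unset Implicit Arguments.

Theorem theorem4 (C : fieldType) (N : nat) (phi psi : word -> C)
    (A B : 'M[C]_N) :
  phi [::] = 1 -> psi [::] = 1 -> c_free phi psi ->
  (forall n, Mphi phi A B n = ser_inv (denom phi A B) n) /\
  (forall (P : ncp C) (m : nat) (u v : 'cV[C]_N),
     (0 < m)%N -> ncdeg_eq P m ->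
     (forall k w, nccoef (geo P m k) w = nccoef (uPsiv A B u v k) w) ->
     forall k, nceval phi (geo P m k) = (u^T *m Mphi phi A B k *m v) 0 0).
Proof.
move=> phi_nil psi_nil cfree; split; first exact: (Mphi_ser_inv phi_nil psi_nil cfree).
move=> P m u v _ _ geo_uPsiv k.
by rewrite (nceval_eq_coef _ (geo_uPsiv k)) nceval_uPsiv.
Qed.
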